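(* Let $f=f(x_1,\ldots,x_n)$ be a positive non-canalyzing Boolean function with $k$ relevant variables such that for some $i\in[n]$ at least one of the restrictions $f_{|x_i=0}$, $f_{|x_i=1}$ is non-canalyzing. Then $f$ has at least $k+2$ extremal points.
   Context: $B=\{0,1\}$, $\preceq$ coordinatewise order. $f$ is positive if $f(\mathbf{x})=1$ and $\mathbf{x}\preceq\mathbf{y}$ imply $f(\mathbf{y})=1$. Extremal points are the $\preceq$-maximal false points and $\preceq$-minimal true points. $f_{|x_i=\alpha}$ is obtained by fixing $x_i=\alpha$; $x_i$ is relevant if $f_{|x_i=0}\not\equiv f_{|x_i=1}$. $f$ is canalyzing if for some $i$, $f_{|x_i=0}$ or $f_{|x_i=1}$ is constant. *)

From mathcomp Require Import all_boot.
Set Implicit Arguments. Unset Strict Implicit. Unset Printing Implicit Defensive.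

Definition point (n : nat) := {ffun 'I_n -> bool}.

Definition boolfun (n : nat) := point n -> bool.

Definition ple n (x y : point n) : bool := [forall i, x i ==> y i].

Definition positive n (f : boolfun n) : Prop :=
  forall x y : point n, f x = true -> ple x y -> f y = true.

Definition max_false n (f : boolfun n) (x : point n) : bool :=
  ~~ f x && [forall y : point n, (~~ f y && ple x y) ==> (y == x)].
Definition min_true n (f : boolfun n) (x : point n) : bool :=
  f x && [forall y : point n, (f y && ple y x) ==> (y == x)].
Definition extremal n (f : boolfun n) (x : point n) : bool :=
  max_false f x || min_true f x.

(* f_{|x_i = a}, viewed as a function of the same n variables (x_i becomes fictitious) *)
Definition restr n (f : boolfun n) (i : 'I_n) (a : bool) : boolfun n :=
  fun x => f [ffun j => if j == i then a else x j].

Definition constant_fun n (g : boolfun n) : Prop :=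
  exists c : bool, forall x, g x = c.

Definition relevant n (f : boolfun n) (i : 'I_n) : bool :=
  [exists x : point n, restr f i false x != restr f i true x].

Definition canalyzing n (f : boolfun n) : Prop :=
  exists i : 'I_n, constant_fun (restr f i false) \/ constant_fun (restr f i true).

(* Write T(i) for the set of minimal true points x of f with x_i = 1; for positive f, i is
   relevant iff T(i) is nonempty.  For relevant i, the map x |-> x[i := ~~ f x] sends the
   extremal points of f_{|x_i=0} injectively to extremal points of f, and misses the points of
   T(i).  If f is not canalyzing but f_{|x_i=0} is, it misses one more extremal point of f:
   either a second point of T(i), or a maximal false point built from the canalyzing variable.
   Choosing i with |T(i)| minimal, one of the two restrictions at i keeps every other relevant
   variable relevant.  Induction on the number k of relevant variables then gives k + 1
   extremal points for positive f and k + 2 for non-canalyzing f; the duality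
   f |-> ~~ f (~~ x) exchanges the two restrictions at i.  The hypothesis on the restrictions
   of f is only used to know that n > 0. *)

From mathcomp Require Import all_boot.
From Stdlib Require Import FunctionalExtensionality Classical.

Set Implicit Arguments. Unset Strict Implicit. Unset Printing Implicit Defensive.

Section Points.
Variable n : nat.
Implicit Types (x y z : point n) (i j k : 'I_n).

Definition upd x i b : point n := [ffun j => if j == i then b else x j].
Definition ones : point n := [ffun=> true].
Definition zeros : point n := [ffun=> false].
Definition weight x := #|[set k | x k]|.
Definition compl x : point n := [ffun k => ~~ x k].

Lemma updE x i b j : upd x i b j = if j == i then b else x j.
Proof. by rewrite ffunE. Qed.

Lemma upd_same x i b : upd x i b i = b.
Proof. by rewrite updE eqxx. Qed.

Lemma upd_other x i b j : j != i -> upd x i b j = x j.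
Proof. by rewrite updE => /negbTE ->. Qed.

Lemma upd_id x i b : x i = b -> upd x i b = x.
Proof. by move=> xi; apply/ffunP => j; rewrite updE; case: eqP => [->|]. Qed.

Lemma upd_upd x i b c : upd (upd x i b) i c = upd x i c.
Proof. by apply/ffunP => j; rewrite !updE; case: eqP. Qed.

Lemma upd_comm x i j b c : i != j -> upd (upd x i b) j c = upd (upd x j c) i b.
Proof.
move=> ij; apply/ffunP => k; rewrite !updE.
by case: (eqVneq k i) => [->|]; [rewrite (negbTE ij) | case: eqP].
Qed.

Lemma upd_neq x i b : x i = ~~ b -> upd x i b != x.
Proof. by move=> xi; apply/eqP => /(congr1 (fun y => y i)); rewrite upd_same xi; case: b {xi}. Qed.

Lemma pleP x y : reflect (forall k, x k -> y k) (ple x y).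
Proof. by apply: (iffP forallP) => h k; [apply/implyP | apply/implyP/h]. Qed.

Lemma ple_refl x : ple x x.
Proof. by apply/pleP. Qed.

Lemma ple_trans y x z : ple x y -> ple y z -> ple x z.
Proof. by move=> /pleP xy /pleP yz; apply/pleP => k /xy /yz. Qed.

Lemma ple_anti x y : ple x y -> ple y x -> x = y.
Proof.
by move=> /pleP xy /pleP yx; apply/ffunP => k; apply/idP/idP; [apply: xy | apply: yx].
Qed.

Lemma ple_ones x : ple x ones.
Proof. by apply/pleP => k; rewrite ffunE. Qed.

Lemma ple_zeros x : ple zeros x.
Proof. by apply/pleP => k; rewrite ffunE. Qed.

Lemma ple_upd x y i b : ple x y -> ple (upd x i b) (upd y i b).
Proof. by move=> /pleP xy; apply/pleP => k; rewrite !updE; case: eqP => // _ /xy. Qed.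

Lemma ple_upd_false x i : ple (upd x i false) x.
Proof. by apply/pleP => k; rewrite updE; case: eqP. Qed.

Lemma ple_upd_true x i : ple x (upd x i true).
Proof. by apply/pleP => k; rewrite updE; case: eqP. Qed.

Lemma ple_upd_false_true x i : ple (upd x i false) (upd x i true).
Proof. exact: ple_trans (ple_upd_false x i) (ple_upd_true x i). Qed.

Lemma ple_upd_falser x y i : ple x y -> x i = false -> ple x (upd y i false).
Proof.
move=> /pleP xy xi; apply/pleP => k xk; rewrite updE.
by case: eqP => [ki|_]; [rewrite ki xi in xk | apply: xy].
Qed.

Lemma ple_upd_truel x y i : ple x y -> y i -> ple (upd x i true) y.
Proof. by move=> /pleP xy yi; apply/pleP => k; rewrite updE; case: eqP => [->|_ /xy]. Qed.

Lemma ple_false x y i : ple x y -> y i = false -> x i = false.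
Proof. by move=> /pleP/(_ i) xy yi; apply: negbTE; apply: contraFN yi. Qed.

Lemma ple_upd_ones x i : (forall k, k != i -> x k) -> ple (upd ones i false) x.
Proof. by move=> h; apply/pleP => k; rewrite updE ffunE; case: eqP => // /eqP /h. Qed.

Lemma weight_lt x y : ple x y -> x != y -> weight x < weight y.
Proof.
move=> /pleP xy xNy; apply: proper_card; rewrite properEneq; apply/andP; split.
  apply: contra xNy => /eqP exy; apply/eqP/ffunP => k.
  by move/setP/(_ k): exy; rewrite !inE.
by apply/subsetP => k; rewrite !inE => /xy.
Qed.

Lemma complK : involutive compl.
Proof. by move=> x; apply/ffunP => k; rewrite !ffunE negbK. Qed.

Lemma compl_inj : injective compl.
Proof. exact: inv_inj complK. Qed.

Lemma ple_compl x y : ple (compl x) (compl y) = ple y x.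
Proof.
by apply/pleP/pleP => h k; have := h k; rewrite !ffunE; case: (x k); case: (y k) => //= ->.
Qed.

Lemma ple_complC x y : ple (compl x) y = ple (compl y) x.
Proof. by rewrite -{1}(complK y) ple_compl. Qed.

Lemma compl_upd x i b : compl (upd x i b) = upd (compl x) i (~~ b).
Proof. by apply/ffunP => k; rewrite !ffunE; case: eqP. Qed.

End Points.

Definition relset n (f : boolfun n) := [set i | relevant f i].
Definition extset n (f : boolfun n) := [set x | extremal f x].

Lemma restrE n (f : boolfun n) i b x : restr f i b x = f (upd x i b).
Proof. by []. Qed.

Section Extrema.
Variables (n : nat) (f : boolfun n).
Implicit Types (x y z : point n) (i j k : 'I_n).

Lemma restr_upd i b c x : restr f i b (upd x i c) = restr f i b x.
Proof. by rewrite !restrE upd_upd. Qed.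

Lemma min_trueP x : reflect (f x /\ forall y, f y -> ple y x -> y = x) (min_true f x).
Proof.
apply: (iffP andP) => -[fx minx]; split=> //.
  by move=> y fy yx; apply/eqP; move/forallP/(_ y): minx; rewrite fy yx.
by apply/forallP => y; apply/implyP => /andP[fy yx]; rewrite (minx y fy yx).
Qed.

Lemma max_falseP x :
  reflect (~~ f x /\ forall y, ~~ f y -> ple x y -> y = x) (max_false f x).
Proof.
apply: (iffP andP) => -[fx maxx]; split=> //.
  by move=> y fy xy; apply/eqP; move/forallP/(_ y): maxx; rewrite fy xy.
by apply/forallP => y; apply/implyP => /andP[fy xy]; rewrite (maxx y fy xy).
Qed.

Lemma min_true_true x : min_true f x -> f x.
Proof. by case/andP. Qed.

Lemma max_false_false x : max_false f x -> ~~ f x.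
Proof. by case/andP. Qed.

Lemma min_true_upd x j : min_true f x -> x j -> ~~ f (upd x j false).
Proof.
move=> /min_trueP[_ minx] xj; apply/negP => fx'.
by move: (minx _ fx' (ple_upd_false x j)); apply/eqP/upd_neq.
Qed.

Lemma exists_min_true y : f y -> exists2 x, min_true f x & ple x y.
Proof.
move=> fy; have P0 : f y && ple y y by rewrite fy ple_refl.
case: (@arg_minnP _ y (fun x => f x && ple x y) (@weight n) P0) => x /andP[fx xy] minx.
exists x => //; apply/min_trueP; split=> // z fz zx; apply/eqP; apply: contraT => zNx.
by move: (minx z); rewrite fz (ple_trans zx xy) leqNgt (weight_lt zx zNx); apply.
Qed.

Lemma extset_gt0 : 0 < #|extset f|.
Proof.
apply/card_gt0P; case: (boolP (f (ones n))) => [/exists_min_true[x mx _]|fo].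
  by exists x; rewrite inE /extremal mx orbT.
exists (ones n); rewrite inE /extremal; apply/orP; left; apply/max_falseP.
by split=> // y _ oy; apply: ple_anti (ple_ones y) oy.
Qed.

Lemma irrelevantE j x : ~~ relevant f j -> f (upd x j false) = f (upd x j true).
Proof. by move/existsPn/(_ x); rewrite !restrE => /negPn/eqP. Qed.

Lemma relevant_restr i b j : relevant (restr f i b) j -> (j != i) && relevant f j.
Proof.
case/existsP => x; rewrite !restrE; case: (eqVneq j i) => [->|ji].
  by rewrite !upd_upd eqxx.
by rewrite !(upd_comm _ _ _ ji) => ne; apply/existsP; exists (upd x i b).
Qed.

Lemma relevant_restr_min_true x i j :
  min_true f x -> x j -> j != i -> relevant (restr f i (x i)) j.
Proof.
move=> mx xj ji; apply/existsP; exists x; rewrite !restrE !(upd_comm _ _ _ ji).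
by rewrite !(upd_id (erefl (x i))) (upd_id xj) (min_true_true mx) (negbTE (min_true_upd mx xj)).
Qed.

End Extrema.

Section Positive.
Variables (n : nat) (f : boolfun n).
Hypothesis pf : positive f.
Implicit Types (x y z : point n) (i j k : 'I_n).

Lemma positive_mono x y : ple x y -> f x -> f y.
Proof. by move=> xy fx; apply: pf x y fx xy. Qed.

Lemma positive_false x y : ple x y -> ~~ f y -> ~~ f x.
Proof. by move=> xy; apply/contra/positive_mono. Qed.

Lemma positive_restr i b : positive (restr f i b).
Proof. by move=> x y; rewrite !restrE => fx /(ple_upd i b)/positive_mono; apply. Qed.

Lemma relevantP j : reflect (exists2 x, min_true f x & x j) (relevant f j).
Proof.
apply: (iffP existsP) => [[x]|[x mx xj]]; last first.
  exists x; rewrite !restrE (upd_id xj) (min_true_true mx).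
  by rewrite (negbTE (min_true_upd mx xj)).
rewrite !restrE; case: (boolP (f (upd x j false))) => [f0|f0].
  by rewrite (positive_mono (ple_upd_false_true x j) f0).
rewrite eq_sym eqbF_neg negbK => /exists_min_true[m mm mx].
exists m => //; apply: contraNT f0 => /negbTE mj.
apply: positive_mono (min_true_true mm).
by rewrite -(upd_upd x j true false); apply: ple_upd_falser.
Qed.

Lemma canalyzingP :
  canalyzing f <-> exists m, ~~ f (upd (ones n) m false) || f (upd (zeros n) m true).
Proof.
split=> [[m [[[] fc]|[[] fc]]]|[m /orP[fm|fm]]]; exists m.
- apply/orP; right; apply: positive_mono (ple_upd_false_true _ m) _.
  by rewrite -restrE fc.
- by apply/orP; left; rewrite -restrE fc.
- by apply/orP; right; rewrite -restrE fc.
- apply/orP; left; apply: positive_false (ple_upd_false_true _ m) _.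
  by rewrite -restrE fc.
- left; exists false => x; rewrite restrE; apply/negbTE.
  exact: positive_false (ple_upd _ _ (ple_ones x)) fm.
- right; exists true => x; rewrite restrE.
  exact: positive_mono (ple_upd _ _ (ple_zeros x)) fm.
Qed.

Lemma min_true_separation i j k :
  j != i -> k != i -> relevant f k -> ~~ relevant (restr f i true) k ->
  ~ (forall x, min_true f x -> x j = x i).
Proof.
move=> ji ki /relevantP[A mA Ak] nk Tij.
have Ai : A i = false.
  apply: negbTE; apply: contra nk => Ai.
  by have := relevant_restr_min_true mA Ak ki; rewrite Ai.
have Aj : A j = false by rewrite Tij.
have jk : j != k by apply: contraTneq Ak => <-; rewrite Aj.
pose z := upd (upd A k false) i true.
have fz : f z.
  rewrite /z -restrE (irrelevantE A nk) restrE (upd_id Ak).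
  exact: positive_mono (ple_upd_true A i) (min_true_true mA).
have [B mB Bz] := exists_min_true fz.
case: (boolP (B i)) => [Bi|/negbTE Bi].
  by have /pleP/(_ j) := Bz; rewrite Tij // Bi /z !upd_other ?Aj // => /(_ isT).
have : ple B (upd A k false).
  have Aki : upd A k false i = false by rewrite upd_other // eq_sym.
  by have := ple_upd_falser Bz Bi; rewrite /z upd_upd (upd_id Aki).
by move/positive_false/(_ (min_true_upd mA Ak)); rewrite (min_true_true mB).
Qed.

Lemma exists_restr_relset i0 : relevant f i0 ->
  exists i b, relevant f i /\ #|relset (restr f i b)|.+1 = #|relset f|.
Proof.
move=> ri0; pose T j := [set x | min_true f x && x j].
case: (@arg_minnP _ i0 (relevant f) (fun j => #|T j|) ri0) => i ri minT.
have keep b : {in relset f :\ i, forall j, relevant (restr f i b) j} ->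
    exists i b, relevant f i /\ #|relset (restr f i b)|.+1 = #|relset f|.
  move=> H; exists i, b; split=> //.
  have -> : relset (restr f i b) = relset f :\ i.
    apply/setP => j; rewrite !inE; apply/idP/idP => [/relevant_restr //|jR].
    by apply: H; rewrite !inE.
  by rewrite [in RHS](cardsD1 i) inE ri.
have [/forall_inP/keep//|/forall_inPn[j]] :=
  boolP [forall j in relset f :\ i, relevant (restr f i false) j].
rewrite !inE => /andP[ji rj] nj.
have Tji : T j \subset T i.
  apply/subsetP => x; rewrite !inE => /andP[mx xj]; rewrite mx /=.
  by apply: contraNT nj => /negbTE xi; rewrite -xi relevant_restr_min_true.
have /eqP eT : T j == T i by rewrite eqEcard Tji minT.
have [/forall_inP/keep//|/forall_inPn[k]] :=
  boolP [forall k in relset f :\ i, relevant (restr f i true) k].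
rewrite !inE => /andP[ki rk] nk; case: (min_true_separation ji ki rk nk) => x mx.
by move/setP/(_ x): eT; rewrite !inE mx.
Qed.

End Positive.

Definition lift_extremal n (f : boolfun n) i (x : point n) := upd x i (~~ f x).

Section RestrictionFalse.
Variables (n : nat) (f : boolfun n) (i : 'I_n).
Hypothesis pf : positive f.
Implicit Types (x y : point n).
Local Notation g := (restr f i false).
Local Notation lift := (lift_extremal f i).

Lemma restr_false_le x : g x -> f x.
Proof. exact: (positive_mono pf (ple_upd_false x i)). Qed.

Lemma extremal_restr_false x : extremal g x -> x i = ~~ g x.
Proof.
case/orP=> [/max_falseP[gx maxx]|/min_trueP[gx minx]].
  rewrite (negbTE gx); case xi: (x i) => //.
  move: (upd_neq (b := true) xi); rewrite (maxx (upd x i true)) ?eqxx //.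
    by rewrite restr_upd.
  exact: ple_upd_true.
rewrite gx; case xi: (x i) => //.
move: (upd_neq (b := false) xi); rewrite (minx (upd x i false)) ?eqxx //.
  by rewrite restr_upd.
exact: ple_upd_false.
Qed.

Lemma min_true_restr_false x : min_true g x -> min_true f x.
Proof.
move=> mx; have xi : x i = false.
  by rewrite extremal_restr_false ?(min_true_true mx) // /extremal mx orbT.
have /min_trueP[gx minx] := mx.
apply/min_trueP; split=> [|y fy yx]; first by rewrite -(upd_id xi).
by apply: (minx _ _ yx); rewrite restrE upd_id // (ple_false yx xi).
Qed.

Lemma max_false_restr_false x : max_false g x -> ~~ f x -> max_false f x.
Proof.
move=> /max_falseP[_ maxx] fx; apply/max_falseP; split=> // y fy xy.
by apply: maxx xy; apply: contra fy; apply: restr_false_le.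
Qed.

Lemma max_false_restr_true x : max_false g x -> f x -> max_false f (upd x i false).
Proof.
move=> mx fx; have xi : x i by rewrite extremal_restr_false ?(max_false_false mx) // /extremal mx.
have /max_falseP[gx maxx] := mx.
apply/max_falseP; split=> // y fy xy.
have yi : y i = false.
  apply: negbTE; apply: contra fy => yi; apply: (positive_mono pf _ fx).
  by rewrite -(upd_id xi) -(upd_upd x i false); apply: ple_upd_truel.
have xy' : ple x (upd y i true).
  by rewrite -(upd_id xi) -(upd_upd x i false); apply: ple_upd.
have := maxx (upd y i true); rewrite restr_upd restrE (upd_id yi) => /(_ fy xy') <-.
by rewrite upd_upd upd_id.
Qed.

Lemma extremal_lift x : extremal g x -> extremal f (lift x).
Proof.
move=> ex; have xi := extremal_restr_false ex.
move: ex; rewrite /extremal /lift_extremal => /orP[mx|mx].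
  apply/orP; left; case: (boolP (f x)) => fx /=.
    exact: max_false_restr_true.
  by rewrite upd_id ?max_false_restr_false // xi (max_false_false mx).
have mfx := min_true_restr_false mx.
by rewrite (min_true_true mfx) upd_id ?mfx ?orbT // xi (min_true_true mx).
Qed.

Lemma lift_extremal_inj : {in extset g &, injective lift}.
Proof.
move=> x y; rewrite !inE => /extremal_restr_false xi /extremal_restr_false yi e.
have e0 : upd x i false = upd y i false.
  by rewrite -(upd_upd x i (~~ f x)) [upd x i _]e upd_upd.
have gxy : g x = g y by rewrite !restrE e0.
have back z : upd (upd z i false) i (z i) = z by rewrite upd_upd upd_id.
by rewrite -(back x) -(back y) e0 xi yi gxy.
Qed.

Lemma lift_extremal_coord x :
  extremal g x -> lift x i -> ~~ f (lift x) && max_false g (lift x).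
Proof.
move=> ex; rewrite /lift_extremal upd_same => fx.
have gx : ~~ g x := contra (@restr_false_le x) fx.
have xi : x i by rewrite extremal_restr_false.
rewrite (negbTE fx) /= (upd_id xi) fx.
by case/orP: ex => // /min_true_true; rewrite (negbTE gx).
Qed.

Lemma card_extset_restr_false (X : {set point n}) :
  X \subset extset f -> {in X, forall y, y i && (f y || ~~ max_false g y)} ->
  #|extset g| + #|X| <= #|extset f|.
Proof.
move=> XE HX; rewrite -(card_in_imset lift_extremal_inj) -cardsUI.
have -> : lift @: extset g :&: X = set0.
  apply/setP => y; rewrite !inE; apply/andP => -[/imsetP[x]]; rewrite inE => ex -> /HX.
  by case/andP => /(lift_extremal_coord ex)/andP[/negbTE -> ->].
rewrite cards0 addn0; apply: subset_leq_card; rewrite subUset XE andbT.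
by apply/subsetP => y /imsetP[x xE ->]; move: xE; rewrite !inE; apply: extremal_lift.
Qed.

Lemma card_extset_restr_false_lt : relevant f i -> #|extset g| < #|extset f|.
Proof.
case/(relevantP pf) => A mA Ai.
have := @card_extset_restr_false [set A]; rewrite cards1 addn1; apply.
  by rewrite sub1set inE /extremal mA orbT.
by move=> y /set1P ->; rewrite Ai (min_true_true mA).
Qed.

End RestrictionFalse.

Section NonCanalyzing.
Variables (n : nat) (f : boolfun n).
Hypotheses (pf : positive f) (nf : ~ canalyzing f).
Implicit Types (x y z : point n) (i j k m : 'I_n).

Lemma noncanalyzing_ones m : f (upd (ones n) m false).
Proof.
case: (boolP (f _)) => // fm; case: nf; apply/(canalyzingP pf).
by exists m; rewrite fm.
Qed.

Lemma noncanalyzing_zeros m : ~~ f (upd (zeros n) m true).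
Proof. by apply/negP => fm; apply: nf; apply/(canalyzingP pf); exists m; rewrite fm orbT. Qed.

Lemma exists_relevant (i0 : 'I_n) : exists j, relevant f j.
Proof.
have [x mx _] := exists_min_true (noncanalyzing_ones i0).
have [/existsP[k xk]|/existsPn x0] := boolP [exists k, x k].
  by exists k; apply/(relevantP pf); exists x.
case/negP: (noncanalyzing_zeros i0); apply: (positive_mono pf _ (min_true_true mx)).
by apply/pleP => k xk; have := x0 k; rewrite xk.
Qed.

Lemma restr_false_canalyzing i : canalyzing (restr f i false) ->
  exists2 j, j != i & ~~ f (upd (upd (ones n) j false) i false).
Proof.
case/(canalyzingP (positive_restr (i := i) (b := false) pf)) => j /orP[]; rewrite restrE.
  by case: (eqVneq j i) => [->|ji fj]; [rewrite upd_upd noncanalyzing_ones | exists j].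
move=> fj; case/negP: (noncanalyzing_zeros j).
exact: (positive_mono pf (ple_upd_false _ i) fj).
Qed.

(* The witness is the all-ones point with coordinates [j] and [m] cleared, for some [m != i]
   with [A m]. *)
Lemma exists_max_false_restr i j A :
  min_true f A -> A i -> (forall B, min_true f B -> B i -> B = A) ->
  j != i -> ~~ f (upd (upd (ones n) j false) i false) ->
  exists z, [&& max_false f z, z i & ~~ max_false (restr f i false) z].
Proof.
move=> mA Ai uA ji fji.
have true_i y : f y -> ~~ y j -> y i.
  move=> fy yj; apply: contraNT fji => /negbTE yi; apply: (positive_mono pf _ fy).
  by apply: ple_upd_falser yi; apply: ple_upd_falser (ple_ones y) (negbTE yj).
have Aj : ~~ A j.
  have [B mB Bu] := exists_min_true (noncanalyzing_ones j).
  have Bj : ~~ B j by rewrite (ple_false Bu) ?upd_same.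
  by rewrite -(uA B mB (true_i B (min_true_true mB) Bj)).
have [m mi Am] : exists2 m, m != i & A m.
  have [/existsP[m /andP[mi Am]]|/existsPn A0] := boolP [exists m, (m != i) && A m].
    by exists m.
  case/negP: (noncanalyzing_zeros i); apply: (positive_mono pf _ (min_true_true mA)).
  apply/pleP => k Ak; rewrite updE; case: eqP => // /eqP ki.
  by have := A0 k; rewrite ki Ak.
have mj : m != j by apply: contraNneq Aj => <-.
pose z := upd (upd (ones n) j false) m false.
have zE k : z k = (k != j) && (k != m).
  by rewrite !updE ffunE; case: eqP; case: eqP.
exists z; apply/and3P; split.
- apply/max_falseP; split.
    apply/negP => /exists_min_true[B mB Bz].
    have Bj : ~~ B j by rewrite (ple_false Bz) // zE eqxx.
    have Bm : B m = false by apply: (ple_false Bz); rewrite zE eqxx andbF.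
    by move: Am; rewrite -(uA B mB (true_i B (min_true_true mB) Bj)) Bm.
  move=> y fy zy.
  have ge_z k : k != j -> k != m -> y k by move=> kj km; apply: (pleP _ _ zy); rewrite zE kj km.
  case yj: (y j).
    case/negP: fy; apply: (positive_mono pf _ (noncanalyzing_ones m)).
    by apply: ple_upd_ones => k km; case: (eqVneq k j) => [->|kj]; last exact: ge_z.
  case ym: (y m).
    case/negP: fy; apply: (positive_mono pf _ (noncanalyzing_ones j)).
    by apply: ple_upd_ones => k kj; case: (eqVneq k m) => [->|km]; last exact: ge_z.
  exact: ple_anti (ple_upd_falser (ple_upd_falser (ple_ones y) yj) ym) zy.
- by rewrite zE eq_sym ji eq_sym mi.
- apply/negP => /max_falseP[_ maxz].
  have zm : z m = false by rewrite zE eqxx andbF.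
  have zmu : upd z m true = upd (ones n) j false.
    by rewrite upd_upd upd_id // upd_other // ffunE.
  have := maxz (upd z m true) _ (ple_upd_true z m).
  by rewrite zmu restrE => /(_ fji) e; move: (upd_neq (b := true) zm); rewrite zmu e eqxx.
Qed.

Lemma card_extset_restr_false_canalyzing i :
  relevant f i -> canalyzing (restr f i false) ->
  #|extset (restr f i false)| + 2 <= #|extset f|.
Proof.
case/(relevantP pf) => A mA Ai /restr_false_canalyzing[j ji fji].
suff [y yE /andP[yA yP]] : exists2 y, y \in extset f &
    (y != A) && (y i && (f y || ~~ max_false (restr f i false) y)).
  have := card_extset_restr_false pf (X := [set A; y]); rewrite cards2 eq_sym yA; apply.
    by apply/subsetP => x /set2P[]->; rewrite // inE /extremal mA orbT.
  by move=> x /set2P[]->; rewrite // Ai (min_true_true mA).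
have [/existsP[B /and3P[mB Bi BA]]|/existsPn uA] :=
  boolP [exists B, [&& min_true f B, B i & B != A]].
  by exists B; rewrite ?inE /extremal ?mB ?orbT // BA Bi (min_true_true mB).
have {}uA B : min_true f B -> B i -> B = A.
  by move=> mB Bi; move: (uA B); rewrite mB Bi negbK => /eqP.
have [z /and3P[mz zi nz]] := exists_max_false_restr mA Ai uA ji fji.
exists z; first by rewrite inE /extremal mz.
apply/and3P; split=> //; last by rewrite nz orbT.
apply/eqP => zA.
by move: (max_false_false mz); rewrite zA (min_true_true mA).
Qed.

End NonCanalyzing.

Definition dual n (f : boolfun n) : boolfun n := fun x => ~~ f (compl x).

Section Duality.
Variable n : nat.
Implicit Types (f g : boolfun n) (x : point n).

Lemma dualK : involutive (@dual n).
Proof. by move=> f; apply: functional_extensionality => x; rewrite /dual complK negbK. Qed.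

Lemma positive_dual f : positive f -> positive (dual f).
Proof.
move=> pf x y; rewrite /dual => fx xy; apply: contra fx => fy.
by apply: (pf _ _ fy); rewrite ple_compl.
Qed.

Lemma min_true_dual f x : min_true (dual f) x = max_false f (compl x).
Proof.
rewrite /min_true /max_false /dual; congr andb; apply/forallP/forallP => H y.
  by move: (H (compl y)); rewrite complK ple_complC (can2_eq (@complK n) (@complK n)).
by move: (H (compl y)); rewrite ple_compl (inj_eq (@compl_inj n)).
Qed.

Lemma max_false_dual f x : max_false (dual f) x = min_true f (compl x).
Proof. by rewrite -[in RHS](dualK f) min_true_dual complK. Qed.

Lemma card_extset_dual f : #|extset (dual f)| = #|extset f|.
Proof.
have -> : extset (dual f) = @compl n @^-1: extset f.
  by apply/setP => x; rewrite !inE /extremal min_true_dual max_false_dual orbC.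
exact/card_preimset/compl_inj.
Qed.

Lemma restr_dual f i b : restr (dual f) i b = dual (restr f i (~~ b)).
Proof. by apply: functional_extensionality => x; rewrite /dual !restrE compl_upd. Qed.

Lemma relevant_dual f j : relevant (dual f) j = relevant f j.
Proof.
suff imp g : relevant g j -> relevant (dual g) j.
  by apply/idP/idP => /imp //; rewrite dualK.
case/existsP => x ne; apply/existsP; exists (compl x).
by rewrite !restr_dual /dual complK (inj_eq negb_inj) eq_sym.
Qed.

Lemma canalyzing_dual f : canalyzing (dual f) <-> canalyzing f.
Proof.
suff imp g : canalyzing g -> canalyzing (dual g) by split=> /imp //; rewrite dualK.
have cdual h : constant_fun h -> constant_fun (dual h).
  by case=> c hc; exists (~~ c) => x; rewrite /dual hc.
by case=> i ci; exists i; rewrite !restr_dual /=; case: ci => /cdual; [right | left].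
Qed.

End Duality.

Lemma card_extset_restr_lt n (f : boolfun n) i b :
  positive f -> relevant f i -> #|extset (restr f i b)| < #|extset f|.
Proof.
move=> pf ri; case: b; last exact: card_extset_restr_false_lt.
rewrite -card_extset_dual -(card_extset_dual f) -(restr_dual f i false).
by apply: card_extset_restr_false_lt; [apply: positive_dual | rewrite relevant_dual].
Qed.

Lemma card_extset_restr_canalyzing n (f : boolfun n) i b :
  positive f -> ~ canalyzing f -> relevant f i -> canalyzing (restr f i b) ->
  #|extset (restr f i b)| + 2 <= #|extset f|.
Proof.
move=> pf nf ri; case: b => cg; last exact: card_extset_restr_false_canalyzing.
rewrite -card_extset_dual -(card_extset_dual f) -(restr_dual f i false).
have nfd : ~ canalyzing (dual f) by move/canalyzing_dual.
apply: (card_extset_restr_false_canalyzing (positive_dual pf) nfd).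
  by rewrite relevant_dual.
by rewrite restr_dual; apply/canalyzing_dual.
Qed.

Lemma card_relset_lt_extset n (f : boolfun n) : positive f -> #|relset f| < #|extset f|.
Proof.
move Hr : #|relset f| => r; elim: r f Hr => [|r IH] f Hr pf; first exact: extset_gt0.
have /card_gt0P[i0] : 0 < #|relset f| by rewrite Hr.
rewrite inE => /(exists_restr_relset pf)[i [b [ri]]]; rewrite Hr => -[Hr'].
have pg := positive_restr (i := i) (b := b) pf.
exact: (leq_ltn_trans (IH _ Hr' pg) (card_extset_restr_lt b pf ri)).
Qed.

Lemma card_relset_noncanalyzing n (f : boolfun n) :
  'I_n -> positive f -> ~ canalyzing f -> #|relset f| + 2 <= #|extset f|.
Proof.
move=> i0; move Hr : #|relset f| => r; elim: r f Hr => [|r IH] f Hr pf nf.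
  have [j rj] := exists_relevant pf nf i0.
  have : 0 < #|relset f| by apply/card_gt0P; exists j; rewrite inE.
  by rewrite Hr.
have /card_gt0P[i1] : 0 < #|relset f| by rewrite Hr.
rewrite inE => /(exists_restr_relset pf)[i [b [ri]]]; rewrite Hr => -[Hr'].
have pg := positive_restr (i := i) (b := b) pf.
have [cg|ncg] := classic (canalyzing (restr f i b)).
  apply: leq_trans (card_extset_restr_canalyzing pf nf ri cg); rewrite leq_add2r -Hr'.
  exact: card_relset_lt_extset pg.
rewrite addSn; exact: (leq_ltn_trans (IH _ Hr' pg ncg) (card_extset_restr_lt b pf ri)).
Qed.

Theorem mainTheorem11 (n : nat) (f : boolfun n) :
  positive f ->
  ~ canalyzing f ->
  (exists i : 'I_n, ~ canalyzing (restr f i false) \/ ~ canalyzing (restr f i true)) ->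
  #|[set i : 'I_n | relevant f i]| + 2 <= #|[set x : point n | extremal f x]|.
Proof. by move=> pf nf [i0 _]; apply: card_relset_noncanalyzing. Qed.
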